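(* Let $R$ be a commutative ring and $\mathfrak{a}\subseteq R$ an ideal. (a) If $\mathfrak{a}$ is nilpotent, then $\Gamma_\mathfrak{a}=\overline{\Gamma}_\mathfrak{a}$ commutes with inductive limits (all small colimits). (b) If $\mathfrak{a}$ is nil, then $\overline{\Gamma}_\mathfrak{a}$ commutes with inductive limits; but there exist a commutative ring $R$ and a nil ideal $\mathfrak{a}$ such that $\Gamma_\mathfrak{a}$ does not commute with filtered inductive limits. (c) If some power $\mathfrak{a}^n$ ($n\geq1$) is finitely generated, then $\Gamma_\mathfrak{a}=\overline{\Gamma}_\mathfrak{a}$ commutes with filtered inductive limits. (d) If $R$ is noetherian, then $\Gamma_\mathfrak{a}=\overline{\Gamma}_\mathfrak{a}$ commutes with filtered inductive limits; but for $R=\mathbb{Z}$, $\mathfrak{a}=2\mathbb{Z}$, it does not commute with all inductive limits (it is not right exact).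
   Context: $\Gamma_\mathfrak{a}(M)=\{x\in M\mid \exists n\in\mathbb{N}:\mathfrak{a}^n\subseteq(0:_Rx)\}$, $\overline{\Gamma}_\mathfrak{a}(M)=\{x\in M\mid \mathfrak{a}\subseteq\sqrt{(0:_Rx)}\}$. Nil: every element of $\mathfrak{a}$ is nilpotent. *)

From HB Require Import structures.
From mathcomp Require Import all_boot all_algebra.
From Stdlib Require Import ClassicalEpsilon.
Set Implicit Arguments. Unset Strict Implicit. Unset Printing Implicit Defensive.
Import GRing.Theory.
Local Open Scope ring_scope.

Definition pb (P : Prop) : bool :=
  if excluded_middle_informative P then true else false.
Lemma pbP (P : Prop) : reflect P (pb P).
Proof. rewrite /pb; case: excluded_middle_informative => h; by constructor. Qed.

Section Ideals.
Variable R : comPzRingType.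

Definition is_ideal (a : R -> Prop) : Prop :=
  [/\ a 0, (forall x y, a x -> a y -> a (x + y)) & (forall r x, a x -> a (r * x))].

Fixpoint ideal_pow (a : R -> Prop) (n : nat) : R -> Prop :=
  match n with
  | 0%N => fun _ => True
  | n'.+1 => fun x => exists s : seq (R * R),
       (forall p, List.In p s -> a p.1 /\ ideal_pow a n' p.2) /\
       x = \sum_(p <- s) p.1 * p.2
  end.

Definition gen_ideal (g : seq R) : R -> Prop :=
  fun x => exists c : 'I_(size g) -> R, x = \sum_(i < size g) c i * g`_i.

Definition finitely_generated (a : R -> Prop) : Prop :=
  exists g : seq R, forall x, a x <-> gen_ideal g x.

Definition nilpotent_ideal (a : R -> Prop) : Prop :=
  exists n : nat, forall r, ideal_pow a n r -> r = 0.

Definition nil_ideal (a : R -> Prop) : Prop :=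
  forall r, a r -> exists n : nat, r ^+ n = 0.

Definition noetherian : Prop :=
  forall a : R -> Prop, is_ideal a -> finitely_generated a.

End Ideals.

Section Torsion.
Variables (R : comPzRingType) (a : R -> Prop).

Definition Gamma (M : lmodType R) (x : M) : Prop :=
  exists n : nat, forall r, ideal_pow a n r -> r *: x = 0.

(* bar Gamma_a(M) = { x | a \subseteq sqrt (0 :_R x) } *)
Definition Gammabar (M : lmodType R) (x : M) : Prop :=
  forall r, a r -> exists n : nat, r ^+ n *: x = 0.

End Torsion.

Record cat := Cat {
  cob :> Type;
  chom : cob -> cob -> Type;
  cid : forall i, chom i i;
  ccomp : forall i j k, chom j k -> chom i j -> chom i k;
  ccomp_id_l : forall i j (f : chom i j), ccomp (cid j) f = f;
  ccomp_id_r : forall i j (f : chom i j), ccomp f (cid i) = f;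
  ccomp_assoc : forall i j k l (h : chom k l) (g : chom j k) (f : chom i j),
      ccomp h (ccomp g f) = ccomp (ccomp h g) f }.

Definition filtered (C : cat) : Prop :=
  [/\ inhabited (cob C),
      (forall i j : C, exists k : C, inhabited (chom i k) /\ inhabited (chom j k)) &
      (forall (i j : C) (f g : chom i j), exists (k : C) (h : chom j k),
           ccomp h f = ccomp h g)].

Section Diagrams.
Variable R : pzRingType.

Record diagram (C : cat) := Diagram {
  dobj : C -> lmodType R;
  dmap : forall i j, chom i j -> dobj i -> dobj j;
  dmap_lin : forall i j (f : chom i j), linear (dmap f);
  dmap_id : forall i (x : dobj i), dmap (cid i) x = x;
  dmap_comp : forall i j k (g : chom j k) (f : chom i j) (x : dobj i),
      dmap (ccomp g f) x = dmap g (dmap f x) }.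

Record cocone (C : cat) (D : diagram C) := Cocone {
  apex : lmodType R;
  leg : forall i, dobj D i -> apex;
  leg_lin : forall i, linear (fun x : dobj D i => leg x);
  leg_comm : forall i j (f : chom i j) (x : dobj D i), leg (dmap f x) = leg x }.

Definition is_colimit (C : cat) (D : diagram C) (K : cocone D) : Prop :=
  forall K' : cocone D,
    (exists h : apex K -> apex K', linear h /\
        forall i (x : dobj D i), h (leg K x) = leg K' x) /\
    (forall h h' : apex K -> apex K', linear h -> linear h' ->
        (forall i (x : dobj D i), h (leg K x) = leg K' x) ->
        (forall i (x : dobj D i), h' (leg K x) = leg K' x) ->
        forall y, h y = h' y).

End Diagrams.

(* Subfunctors of the identity of R-Mod (given by a submodule-valued   *)
(* predicate stable under linear maps), and their action on diagrams.  *)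
Unset Implicit Arguments.
Record subfun (R : pzRingType) := SubFun {
  sf_pred :> forall M : lmodType R, M -> Prop;
  sf_0 : forall M : lmodType R, sf_pred M 0;
  sf_add : forall (M : lmodType R) (x y : M), sf_pred M x -> sf_pred M y -> sf_pred M (x + y);
  sf_scale : forall (M : lmodType R) (c : R) (x : M), sf_pred M x -> sf_pred M (c *: x);
  sf_map : forall (M N : lmodType R) (f : M -> N), linear f ->
      forall x, sf_pred M x -> sf_pred N (f x) }.

Set Implicit Arguments.
Arguments sf_pred {R} s M x : rename.

Section SubModule.
Variables (R : pzRingType) (F : subfun R) (M : lmodType R).

Definition sfp : pred M := fun x => pb (F M x).

Lemma sfp_closed : subsemimod_closed sfp.
Proof.
split; [split|].
- by apply/pbP; apply: sf_0.
- by move=> x y /pbP hx /pbP hy; apply/pbP; apply: sf_add.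
- by move=> c x /pbP hx; apply/pbP; apply: sf_scale.
Qed.

HB.instance Definition _ := GRing.isSubmodClosed.Build R M sfp sfp_closed.

Record sft := SFT { sfval : M; sfvalP : sfp sfval }.
HB.instance Definition _ := [isSub for sfval].
HB.instance Definition _ := [Choice of sft by <:].
HB.instance Definition _ := [SubChoice_isSubLmodule of sft by <:].

End SubModule.

Lemma lin0 (R : pzRingType) (M N : lmodType R) (f : M -> N) :
  linear f -> f 0 = 0.
Proof.
move=> fl; have := fl 1 0 0; rewrite scale1r addr0 scale1r => h.
by apply: (addrI (f 0)); rewrite addr0 -h.
Qed.

Lemma linZ (R : pzRingType) (M N : lmodType R) (f : M -> N) :
  linear f -> forall c x, f (c *: x) = c *: f x.
Proof. by move=> fl c x; have := fl c x 0; rewrite !addr0 (lin0 fl) addr0. Qed.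

Lemma linD (R : pzRingType) (M N : lmodType R) (f : M -> N) :
  linear f -> forall x y, f (x + y) = f x + f y.
Proof. by move=> fl x y; have := fl 1 x y; rewrite !scale1r. Qed.

Section SubFunctorAction.
Variables (R : pzRingType) (F : subfun R).

Definition sfmap (M N : lmodType R) (f : M -> N) (fl : linear f) (x : sft F M) :
  sft F N := @SFT _ F N (f (sfval x))
     (introT (pbP _) (sf_map _ F M N f fl _ (elimT (pbP _) (sfvalP x)))).

Lemma sfmap_lin (M N : lmodType R) (f : M -> N) (fl : linear f) :
  linear (sfmap fl).
Proof. by move=> c x y; apply: val_inj => /=; apply: fl. Qed.

Definition sf_diagram (C : cat) (D : diagram R C) : diagram R C.
Proof.
refine (@Diagram R C (fun i => sft F (dobj D i))
   (fun i j f => sfmap (@dmap_lin _ _ D i j f)) (fun i j f => sfmap_lin _) _ _).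
- by move=> i x; apply: val_inj => /=; apply: dmap_id.
- by move=> i j k g f x; apply: val_inj => /=; apply: dmap_comp.
Defined.

Definition sf_cocone (C : cat) (D : diagram R C) (K : cocone D) :
  cocone (sf_diagram D).
Proof.
refine (@Cocone R C (sf_diagram D) (sft F (apex K))
   (fun i => sfmap (@leg_lin _ _ D K i)) (fun i => sfmap_lin _) _).
by move=> i j f x; apply: val_inj => /=; apply: leg_comm.
Defined.

Definition commutes_with_colimits : Prop :=
  forall (C : cat) (D : diagram R C) (K : cocone D),
    is_colimit K -> is_colimit (sf_cocone K).

Definition commutes_with_filtered_colimits : Prop :=
  forall (C : cat), filtered C -> forall (D : diagram R C) (K : cocone D),
    is_colimit K -> is_colimit (sf_cocone K).

End SubFunctorAction.

Section TorsionFunctors.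
Variables (R : comPzRingType) (a : R -> Prop).

Lemma ideal_pow_ideal (ha : is_ideal a) n : is_ideal (ideal_pow a n).
Proof.
case: ha => a0 aD aM; elim: n => [|n [p0 pD pM]] //=.
split.
- by exists [::]; split => //; rewrite big_nil.
- move=> x y [s [hs ->]] [t [ht ->]]; exists (s ++ t); split; last by rewrite big_cat.
  by move=> p hp; case: (List.in_app_or _ _ _ hp) => [/hs|/ht].
- move=> r x [s [hs ->]]; exists [seq (r * p.1, p.2) | p <- s]; split.
    move=> p hp; case: (proj1 (List.in_map_iff _ _ _) hp) => q [<- /hs [hq1 hq2]]; split => //; exact: aM.
  by rewrite big_map mulr_sumr; apply: eq_bigr => p _; rewrite mulrA.
Qed.

Lemma ideal_pow_S (ha : is_ideal a) n r : ideal_pow a n.+1 r -> ideal_pow a n r.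
Proof.
case: (ideal_pow_ideal ha n) => p0 pD pM.
case=> s [hs ->]; elim: s hs => [|p s IH] hs; first by rewrite big_nil.
rewrite big_cons; apply: pD; last by apply: IH => q hq; apply: hs; right.
by case: (hs p (or_introl erefl)) => _ h2; apply: pM.
Qed.

Lemma ideal_pow_le (ha : is_ideal a) m n r :
  (m <= n)%N -> ideal_pow a n r -> ideal_pow a m r.
Proof.
move/subnKC <-; elim: (n - m)%N => [|k IH]; first by rewrite addn0.
by rewrite addnS => /ideal_pow_S -/(_ ha) /IH.
Qed.

Definition Gamma_sf (ha : is_ideal a) : subfun R.
Proof.
refine (@SubFun R (fun M x => @Gamma R a M x) _ _ _ _).
- by move=> M; exists 0%N => r _; rewrite scaler0.
- move=> M x y [m hm] [n hn]; exists (maxn m n) => r hr.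
  rewrite scalerDr hm ?hn ?add0r //.
    exact: (ideal_pow_le ha (leq_maxr m n) hr).
  exact: (ideal_pow_le ha (leq_maxl m n) hr).
- move=> M c x [n hn]; exists n => r hr.
  by rewrite scalerA mulrC -scalerA hn // scaler0.
- move=> M N f fl x [n hn]; exists n => r hr.
  by rewrite -(linZ fl) hn // (lin0 fl).
Defined.

Definition Gammabar_sf : subfun R.
Proof.
refine (@SubFun R (fun M x => @Gammabar R a M x) _ _ _ _).
- by move=> M r _; exists 0%N; rewrite scaler0.
- move=> M x y hx hy r ar; case: (hx r ar) => m hm; case: (hy r ar) => n hn.
  exists (m + n)%N; rewrite scalerDr exprD -!scalerA hn scaler0.
  by rewrite scalerA mulrC -scalerA hm scaler0 addr0.
- move=> M c x hx r ar; case: (hx r ar) => n hn; exists n.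
  by rewrite scalerA mulrC -scalerA hn scaler0.
- move=> M N f fl x hx r ar; case: (hx r ar) => n hn; exists n.
  by rewrite -(linZ fl) hn (lin0 fl).
Defined.

End TorsionFunctors.

Definition two_Z : int -> Prop := fun x => (2 %| x)%Z.

Lemma two_Z_ideal : is_ideal two_Z.
Proof.
split; rewrite /two_Z.
- exact: dvdz0.
- by move=> x y hx hy; apply: rpredD.
- by move=> r x hx; rewrite dvdz_mull.
Qed.

From Pilot Require Import Defs.
From HB Require Import structures.
From mathcomp Require Import all_boot all_algebra.
From mathcomp Require Import boolp zify.
Import GRing.Theory.
Local Open Scope ring_scope.
Set Implicit Arguments. Unset Strict Implicit. Unset Printing Implicit Defensive.

(* Both functors are subfunctors of the identity of R-Mod.
   - (a) and (b), positive part: if a is nilpotent (resp. nil), every element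
     of every module lies in Gamma_a (resp. Gammabar_a), and a subfunctor
     equal to the identity commutes with all colimits.
   - (c) and (d), positive part: in a filtered colimit every element comes
     from some stage, and an element dying in the colimit already dies at a
     later stage; both facts are obtained by comparison with the explicit
     model "pairs (i, x) up to eventual equality", a setoid quotient.  If
     a^n = (g) is finitely generated, x lies in Gamma_a iff each generator
     acts nilpotently on x; finitely many such conditions are realised at a
     single later stage, which gives a lifting criterion for Gamma_a, and
     also Gamma_a = Gammabar_a.  Noetherian rings are the case n = 1.
   - Counterexamples, computed with quotients by submodules: for the nil
     ideal of eventually zero even sequences in P2 = prod_n Z/2^(n+1),
     Gamma fails on the colimit of the chain P2 / (sequences vanishing from
     i on); for a = 2Z, Gamma fails on the coequalizer Z/2Z of 2 and 0,
     because Gamma(Z) = 0.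
   The file develops, in order: setoid and submodule quotients, filtered
   colimits and the lifting criterion, the total-subfunctor and zero-colimit
   lemmas, annihilation by powers of ideals, part (c), the two
   counterexamples, and finally the proposition. *)

Lemma linN (R : pzRingType) (M N : lmodType R) (f : M -> N) :
  linear f -> forall x, f (- x) = - f x.
Proof. by move=> fl x; rewrite -scaleN1r (linZ fl) scaleN1r. Qed.

Lemma comp_lin (R : pzRingType) (M N P : lmodType R) (f : M -> N) (g : N -> P) :
  linear f -> linear g -> linear (fun x => g (f x)).
Proof. by move=> fl gl c x y; rewrite fl gl. Qed.

Section SetoidQuotient.
Variables (R : pzRingType) (T : Type) (E : T -> T -> Prop).
Hypotheses (E_refl : forall p, E p p) (E_sym : forall p q, E p q -> E q p)
  (E_trans : forall p q r, E p q -> E q r -> E p r).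
Variables (tadd : T -> T -> T) (topp : T -> T) (tscale : R -> T -> T) (tzero : T).
Hypotheses
  (E_add : forall p p' q q', E p p' -> E q q' -> E (tadd p q) (tadd p' q'))
  (E_opp : forall p p', E p p' -> E (topp p) (topp p'))
  (E_scale : forall c p p', E p p' -> E (tscale c p) (tscale c p'))
  (E_addA : forall p q r, E (tadd p (tadd q r)) (tadd (tadd p q) r))
  (E_addC : forall p q, E (tadd p q) (tadd q p))
  (E_add0 : forall p, E (tadd tzero p) p)
  (E_addN : forall p, E (tadd (topp p) p) tzero)
  (E_scaleA : forall a b p, E (tscale a (tscale b p)) (tscale (a * b) p))
  (E_scale1 : forall p, E (tscale 1 p) p)
  (E_scaleDr : forall a p q, E (tscale a (tadd p q)) (tadd (tscale a p) (tscale a q)))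
  (E_scaleDl : forall a b p, E (tscale (a + b) p) (tadd (tscale a p) (tscale b p))).

Definition quot := {P : T -> Prop | exists x, P = E x}.
HB.instance Definition _ := gen_eqMixin quot.
HB.instance Definition _ := gen_choiceMixin quot.

Definition qcls (x : T) : quot := exist _ (E x) (ex_intro _ x erefl).

Lemma qclsP x y : qcls x = qcls y <-> E x y.
Proof.
split; first by move/(congr1 sval) => /= exy; rewrite exy.
move=> hxy; apply: eq_exist_uncurried.
have e : E x = E y.
  apply: funext => z; apply: propext.
  by split; [apply: E_trans (E_sym hxy) | apply: E_trans hxy].
by exists e; apply: Prop_irrelevance.
Qed.

Definition qrep (q : quot) : T :=
  proj1_sig (cid (proj2_sig q)).

Lemma qrepK q : qcls (qrep q) = q.
Proof.
rewrite /qrep; case: cid => x /= hx.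
by case: q hx => P hP /= hx; subst P; congr exist; apply: Prop_irrelevance.
Qed.

Lemma qrepE x : E (qrep (qcls x)) x.
Proof. by apply/qclsP; rewrite qrepK. Qed.

Lemma quot_ind (P : quot -> Prop) : (forall x, P (qcls x)) -> forall q, P q.
Proof. by move=> h q; rewrite -(qrepK q). Qed.

Definition qadd (u v : quot) := qcls (tadd (qrep u) (qrep v)).
Definition qopp (u : quot) := qcls (topp (qrep u)).
Definition qscale c (u : quot) := qcls (tscale c (qrep u)).

Lemma qaddE x y : qadd (qcls x) (qcls y) = qcls (tadd x y).
Proof. by apply/qclsP; apply: E_add; apply: qrepE. Qed.
Lemma qoppE x : qopp (qcls x) = qcls (topp x).
Proof. by apply/qclsP; apply: E_opp; apply: qrepE. Qed.
Lemma qscaleE c x : qscale c (qcls x) = qcls (tscale c x).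
Proof. by apply/qclsP; apply: E_scale; apply: qrepE. Qed.

Lemma qaddA : associative qadd.
Proof.
by elim/quot_ind => x; elim/quot_ind => y; elim/quot_ind => z;
  rewrite !qaddE; apply/qclsP.
Qed.
Lemma qaddC : commutative qadd.
Proof. by elim/quot_ind => x; elim/quot_ind => y; rewrite !qaddE; apply/qclsP. Qed.
Lemma qadd0 : left_id (qcls tzero) qadd.
Proof. by elim/quot_ind => x; rewrite qaddE; apply/qclsP. Qed.
Lemma qaddN : left_inverse (qcls tzero) qopp qadd.
Proof. by elim/quot_ind => x; rewrite qoppE qaddE; apply/qclsP. Qed.

HB.instance Definition _ := GRing.isZmodule.Build quot qaddA qaddC qadd0 qaddN.

Lemma qaddD (u v : quot) : u + v = qadd u v. Proof. by []. Qed.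

Lemma qscaleA a b v : qscale a (qscale b v) = qscale (a * b) v.
Proof. by elim/quot_ind: v => x; rewrite !qscaleE; apply/qclsP. Qed.
Lemma qscale1 : left_id 1 qscale.
Proof. by elim/quot_ind => x; rewrite qscaleE; apply/qclsP. Qed.
Lemma qscaleDr : right_distributive qscale +%R.
Proof.
move=> a; elim/quot_ind => x; elim/quot_ind => y.
by rewrite !qaddD qaddE !qscaleE qaddE; apply/qclsP.
Qed.
Lemma qscaleDl v : {morph qscale^~ v : a b / a + b}.
Proof.
elim/quot_ind: v => x a b.
by rewrite qaddD !qscaleE qaddE; apply/qclsP.
Qed.

HB.instance Definition _ :=
  GRing.Zmodule_isLmodule.Build R quot qscaleA qscale1 qscaleDr qscaleDl.

Definition quot_lmod : lmodType R := quot.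

Lemma qclsD x y : (qcls x : quot_lmod) + qcls y = qcls (tadd x y).
Proof. exact: qaddE. Qed.
Lemma qclsZ c x : c *: (qcls x : quot_lmod) = qcls (tscale c x).
Proof. exact: qscaleE. Qed.
Lemma qcls0 : (0 : quot_lmod) = qcls tzero.
Proof. by []. Qed.

End SetoidQuotient.

Record submodule (R : pzRingType) (V : lmodType R) := Submodule {
  smem :> V -> Prop;
  smem0 : smem 0;
  smemD : forall x y, smem x -> smem y -> smem (x + y);
  smemZ : forall c x, smem x -> smem (c *: x) }.

Section QuotientModule.
Variables (R : pzRingType) (V : lmodType R) (S : submodule V).

Lemma smemN x : S x -> S (- x).
Proof. by move=> hx; rewrite -scaleN1r; apply: smemZ. Qed.

Definition scong (x y : V) : Prop := S (x - y).

Lemma scong_refl x : scong x x.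
Proof. by rewrite /scong subrr; apply: smem0. Qed.
Lemma scong_sym x y : scong x y -> scong y x.
Proof. by rewrite /scong => /smemN; rewrite opprB. Qed.
Lemma scong_trans x y z : scong x y -> scong y z -> scong x z.
Proof. by rewrite /scong => hxy /(smemD hxy); rewrite addrA subrK. Qed.
Lemma scong_add p p' q q' : scong p p' -> scong q q' -> scong (p + q) (p' + q').
Proof. by rewrite /scong => hp /(smemD hp); rewrite opprD addrACA. Qed.
Lemma scong_opp p p' : scong p p' -> scong (- p) (- p').
Proof. by rewrite /scong => /smemN; rewrite opprD. Qed.
Lemma scong_scale c p p' : scong p p' -> scong (c *: p) (c *: p').
Proof. by rewrite /scong => /(smemZ c); rewrite scalerBr. Qed.
Lemma scong_eq p q : p = q -> scong p q.
Proof. by move=> ->; apply: scong_refl. Qed.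

Definition quotient_module : lmodType R :=
  @quot_lmod R V scong scong_refl scong_sym scong_trans +%R -%R *:%R 0
    scong_add scong_opp scong_scale
    (fun p q r => scong_eq (addrA p q r)) (fun p q => scong_eq (addrC p q))
    (fun p => scong_eq (add0r p)) (fun p => scong_eq (addNr p))
    (fun a b p => scong_eq (scalerA a b p)) (fun p => scong_eq (scale1r p))
    (fun a p q => scong_eq (scalerDr a p q)) (fun a b p => scong_eq (scalerDl p a b)).

Definition qproj (x : V) : quotient_module := qcls scong x.

Lemma qprojP x y : qproj x = qproj y <-> S (x - y).
Proof. exact: qclsP scong_refl scong_sym scong_trans x y. Qed.

Lemma qproj_eq0 x : qproj x = 0 <-> S x.
Proof. by rewrite (qcls0 (E := scong)) qprojP subr0. Qed.

Lemma qproj_lin : linear qproj.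
Proof. by move=> c x y; rewrite /qproj qclsZ qclsD. Qed.

Lemma qproj_ind (P : quotient_module -> Prop) : (forall x, P (qproj x)) -> forall q, P q.
Proof. exact: quot_ind. Qed.

Definition qlift (W : Type) (L : V -> W) (q : quotient_module) : W := L (qrep q).

Section Lift.
Variables (W : lmodType R) (L : V -> W).
Hypotheses (L_lin : linear L) (L_S : forall x, S x -> L x = 0).

Lemma qliftE x : qlift L (qproj x) = L x.
Proof.
apply/eqP; rewrite -subr_eq0 -(linN L_lin) -(linD L_lin) L_S //.
exact: qrepE scong_refl scong_sym scong_trans x.
Qed.

Lemma qlift_lin : linear (qlift L).
Proof.
move=> c; elim/qproj_ind => x; elim/qproj_ind => y.
by rewrite -(linZ qproj_lin) -(linD qproj_lin) !qliftE L_lin.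
Qed.
End Lift.

End QuotientModule.

(* Over a filtered category the colimit is
   modelled by pairs (i, x) with x in D i, two pairs being identified when
   they become equal under some pair of arrows to a common object.  Comparing
   an arbitrary colimit K with this model yields the two classical facts used
   below: every element of the apex is a leg image, and an element of D i is
   killed by its leg exactly when it is killed by some arrow out of i. *)
Section FilteredColimit.
Variables (R : pzRingType) (C : Defs.cat) (hC : filtered C) (D : diagram R C).

Local Notation dm f x := (@dmap R C D _ _ f x).

Lemma dmapD i j (f : chom i j) (x y : dobj D i) : dm f (x + y) = dm f x + dm f y.
Proof. exact: linD (dmap_lin f) x y. Qed.
Lemma dmapZ i j (f : chom i j) c (x : dobj D i) : dm f (c *: x) = c *: dm f x.
Proof. exact: linZ (dmap_lin f) c x. Qed.
Lemma dmapN i j (f : chom i j) (x : dobj D i) : dm f (- x) = - dm f x.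
Proof. exact: linN (dmap_lin f) x. Qed.
Lemma dmap0 i j (f : chom i j) : dm f (0 : dobj D i) = 0.
Proof. exact: lin0 (dmap_lin f). Qed.

Lemma filtered_cup (i j : C) : exists k (u : chom i k) (v : chom j k), True.
Proof. by case: hC => _ h _; case: (h i j) => k [[u] [v]]; exists k, u, v. Qed.

Lemma filtered_coeq (i j : C) (f g : chom i j) :
  exists (k : C) (h : chom j k), forall x : dobj D i, dm h (dm f x) = dm h (dm g x).
Proof.
case: hC => _ _ /(_ i j f g) [k [h e]].
by exists k, h => x; rewrite -!dmap_comp e.
Qed.

Definition cup_data (i j : C) : {k : C & (chom i k * chom j k)%type}.
Proof.
have [k /cid [u /cid [v _]]] := cid (filtered_cup i j).
exact: existT _ k (u, v).
Defined.
Definition cup (i j : C) : C := projT1 (cup_data i j).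
Definition cupl (i j : C) : chom i (cup i j) := (projT2 (cup_data i j)).1.
Definition cupr (i j : C) : chom j (cup i j) := (projT2 (cup_data i j)).2.

Lemma filtered_nonempty : exists i : C, True.
Proof. by case: hC => -[i] _ _; exists i. Qed.
Definition base_obj : C := proj1_sig (cid filtered_nonempty).

Definition point := {i : C & dobj D i}.
Definition pt (i : C) (x : dobj D i) : point := existT _ i x.

Definition colim_eq (p q : point) : Prop :=
  exists (k : C) (f : chom (tag p) k) (g : chom (tag q) k),
    dm f (tagged p) = dm g (tagged q).

Lemma colim_eq_refl p : colim_eq p p.
Proof. by exists (tag p), (Defs.cid _), (Defs.cid _). Qed.

Lemma colim_eq_sym p q : colim_eq p q -> colim_eq q p.
Proof. by case=> k [f [g e]]; exists k, g, f. Qed.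

Lemma colim_eq_trans p q r : colim_eq p q -> colim_eq q r -> colim_eq p r.
Proof.
case=> k [f [g e]] [l [f' [g' e']]].
case: (filtered_cup k l) => m [u [v _]].
case: (filtered_coeq (ccomp u g) (ccomp v f')) => n [w ew].
exists n, (ccomp w (ccomp u f)), (ccomp w (ccomp v g')).
by rewrite !dmap_comp e -e'; have := ew (tagged q); rewrite !dmap_comp.
Qed.

Lemma colim_eq_map i k (f : chom i k) (x : dobj D i) : colim_eq (pt x) (pt (dm f x)).
Proof. by exists k, f, (Defs.cid k); rewrite dmap_id. Qed.

Definition padd (p q : point) : point :=
  pt (dm (cupl (tag p) (tag q)) (tagged p) + dm (cupr (tag p) (tag q)) (tagged q)).
Definition popp (p : point) : point := pt (- tagged p).
Definition pscale (c : R) (p : point) : point := pt (c *: tagged p).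
Definition pzero : point := pt (0 : dobj D base_obj).

Lemma colim_eq_padd p q k (f : chom (tag p) k) (g : chom (tag q) k) :
  colim_eq (padd p q) (pt (dm f (tagged p) + dm g (tagged q))).
Proof.
rewrite /padd; set f0 := cupl _ _; set g0 := cupr _ _.
case: (filtered_cup (cup (tag p) (tag q)) k) => m [u [v _]].
case: (filtered_coeq (ccomp u f0) (ccomp v f)) => n1 [w1 e1].
case: (filtered_coeq (ccomp w1 (ccomp u g0)) (ccomp w1 (ccomp v g))) => n2 [w2 e2].
exists n2, (ccomp w2 (ccomp w1 u)), (ccomp w2 (ccomp w1 v)).
rewrite /= !dmap_comp !dmapD; congr (_ + _).
  by have := e1 (tagged p); rewrite !dmap_comp => ->.
by have := e2 (tagged q); rewrite !dmap_comp.
Qed.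

Lemma colim_eq_add p p' q q' :
  colim_eq p p' -> colim_eq q q' -> colim_eq (padd p q) (padd p' q').
Proof.
case=> k [f [f' e]] [l [g [g' e']]].
case: (filtered_cup k l) => m [u [v _]].
apply: colim_eq_trans (colim_eq_padd (ccomp u f) (ccomp v g)) _.
apply: colim_eq_sym; apply: colim_eq_trans (colim_eq_padd (ccomp u f') (ccomp v g')) _.
by rewrite !dmap_comp e e'; apply: colim_eq_refl.
Qed.

Lemma colim_eq_opp p p' : colim_eq p p' -> colim_eq (popp p) (popp p').
Proof. by case=> k [f [f' e]]; exists k, f, f'; rewrite /= !dmapN e. Qed.

Lemma colim_eq_scale c p p' : colim_eq p p' -> colim_eq (pscale c p) (pscale c p').
Proof. by case=> k [f [f' e]]; exists k, f, f'; rewrite /= !dmapZ e. Qed.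

Lemma colim_eq_addA p q r : colim_eq (padd p (padd q r)) (padd (padd p q) r).
Proof.
pose k1 := cup (tag p) (tag q); pose k := cup k1 (tag r).
pose a := ccomp (cupl k1 (tag r)) (cupl (tag p) (tag q)).
pose b := ccomp (cupl k1 (tag r)) (cupr (tag p) (tag q)).
pose c := cupr k1 (tag r).
have qr : colim_eq (padd q r) (pt (dm b (tagged q) + dm c (tagged r))).
  exact: colim_eq_padd.
apply: colim_eq_trans (colim_eq_add (colim_eq_refl p) qr) _.
apply: colim_eq_trans
  (@colim_eq_padd p (pt (dm b (tagged q) + dm c (tagged r))) _ a (Defs.cid k)) _.
apply: colim_eq_sym.
apply: colim_eq_trans (@colim_eq_padd (padd p q) r _ (cupl k1 (tag r)) c) _.
rewrite /= dmap_id dmapD !dmap_comp addrA; exact: colim_eq_refl.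
Qed.

Lemma colim_eq_addC p q : colim_eq (padd p q) (padd q p).
Proof.
apply: colim_eq_trans (colim_eq_padd (cupl (tag p) (tag q)) (cupr (tag p) (tag q))) _.
apply: colim_eq_sym.
apply: colim_eq_trans (colim_eq_padd (cupr (tag p) (tag q)) (cupl (tag p) (tag q))) _.
by rewrite addrC; apply: colim_eq_refl.
Qed.

Lemma colim_eq_add0 p : colim_eq (padd pzero p) p.
Proof. by rewrite {1}/padd /= dmap0 add0r; apply: colim_eq_sym; apply: colim_eq_map. Qed.

Lemma colim_eq_addN p : colim_eq (padd (popp p) p) pzero.
Proof.
apply: colim_eq_trans (@colim_eq_padd (popp p) p _ (Defs.cid _) (Defs.cid _)) _.
rewrite !dmap_id /= addNr.
by case: (filtered_cup (tag p) base_obj) => m [u [v _]]; exists m, u, v; rewrite !dmap0.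
Qed.

Lemma colim_eq_scaleA a b p : colim_eq (pscale a (pscale b p)) (pscale (a * b) p).
Proof. by rewrite /pscale /= scalerA; apply: colim_eq_refl. Qed.

Lemma colim_eq_scale1 p : colim_eq (pscale 1 p) p.
Proof. by rewrite /pscale scale1r; case: p => i x; apply: colim_eq_refl. Qed.

Lemma colim_eq_scaleDr a p q :
  colim_eq (pscale a (padd p q)) (padd (pscale a p) (pscale a q)).
Proof. by rewrite /pscale /padd /= scalerDr !dmapZ; apply: colim_eq_refl. Qed.

Lemma colim_eq_scaleDl a b p :
  colim_eq (pscale (a + b) p) (padd (pscale a p) (pscale b p)).
Proof.
apply: colim_eq_sym.
apply: colim_eq_trans
  (@colim_eq_padd (pscale a p) (pscale b p) _ (Defs.cid _) (Defs.cid _)) _.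
by rewrite !dmap_id /= -scalerDl; apply: colim_eq_refl.
Qed.

Definition model : lmodType R :=
  quot_lmod colim_eq_refl colim_eq_sym colim_eq_trans colim_eq_add colim_eq_opp
    colim_eq_scale colim_eq_addA colim_eq_addC colim_eq_add0 colim_eq_addN
    colim_eq_scaleA colim_eq_scale1 colim_eq_scaleDr colim_eq_scaleDl.

Local Notation model_clsP := (qclsP colim_eq_refl colim_eq_sym colim_eq_trans).

Definition model_leg (i : C) (x : dobj D i) : model := qcls colim_eq (pt x).

Lemma model_leg_lin i : linear (@model_leg i).
Proof.
move=> c x y; rewrite /model_leg qclsZ qclsD; apply/model_clsP; apply: colim_eq_sym.
apply: colim_eq_trans
  (@colim_eq_padd (pscale c (pt x)) (pt y) _ (Defs.cid i) (Defs.cid i)) _.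
by rewrite !dmap_id; apply: colim_eq_refl.
Qed.

Lemma model_leg_comm i j (f : chom i j) (x : dobj D i) : model_leg (dm f x) = model_leg x.
Proof. by apply/model_clsP; apply: colim_eq_sym; apply: colim_eq_map. Qed.

Definition model_cocone : cocone D := Cocone model_leg_lin model_leg_comm.

Section AnyColimit.
Variables (K : cocone D) (Kc : is_colimit K).

Lemma filtered_leg_kernel i (x : dobj D i) :
  leg K x = 0 -> exists j (f : chom i j), dm f x = 0.
Proof.
move=> hx; case: (Kc model_cocone) => [[h [hl hK]] _].
have := hK i x; rewrite hx (lin0 hl) /= /model_leg => /esym.
rewrite (qcls0 (E := colim_eq)) => /model_clsP [k [f [g e]]].
by exists k, f; rewrite e /= dmap0.
Qed.

Lemma filtered_leg_kernel_seq i (s : seq (dobj D i)) :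
  (forall z, z \in s -> leg K z = 0) ->
  exists j (f : chom i j), forall z, z \in s -> dm f z = 0.
Proof.
elim: s => [|z s IH] H; first by exists i, (Defs.cid i).
case: IH => [w ws|j [f hf]]; first by apply: H; rewrite inE ws orbT.
have : leg K (dm f z) = 0 by rewrite leg_comm; apply: H; rewrite inE eqxx.
case/filtered_leg_kernel => l [f2 e].
exists l, (ccomp f2 f) => w; rewrite inE => /orP [/eqP ->|ws].
  by rewrite dmap_comp.
by rewrite dmap_comp hf // dmap0.
Qed.

Lemma leg_colim_eq p q : colim_eq p q -> leg K (tagged p) = leg K (tagged q).
Proof. by case=> k [f [g e]]; rewrite -(leg_comm K f) -(leg_comm K g) e. Qed.

Definition model_to_apex (q : model) : apex K := leg K (tagged (qrep q)).

Lemma model_to_apexE p : model_to_apex (qcls colim_eq p) = leg K (tagged p).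
Proof.
by apply: leg_colim_eq; apply: (qrepE colim_eq_refl colim_eq_sym colim_eq_trans).
Qed.

Lemma model_to_apex_lin : linear model_to_apex.
Proof.
move=> c; elim/quot_ind => p; elim/quot_ind => q.
rewrite qclsZ qclsD model_to_apexE /= (linD (@leg_lin _ _ _ K _)) !leg_comm.
by rewrite (linZ (@leg_lin _ _ _ K _)) -!model_to_apexE.
Qed.

Lemma filtered_leg_surj (y : apex K) : exists i (x : dobj D i), y = leg K x.
Proof.
case: (Kc model_cocone) => [[h [hl hK]] _].
case: (Kc K) => _ /(_ (fun z => model_to_apex (h z)) id) uniq.
exists (tag (qrep (h y))), (tagged (qrep (h y))).
rewrite -/(model_to_apex (h y)); symmetry; apply: uniq => //.
- exact: comp_lin hl model_to_apex_lin.
- by move=> i x; rewrite hK /= /model_leg model_to_apexE.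
Qed.

End AnyColimit.
End FilteredColimit.

(* The universal map out of F(K) is
   then defined by lifting each element of F(K) to some F(D j). *)
Section LiftingCriterion.
Variables (R : pzRingType) (F : subfun R) (C : Defs.cat) (hC : filtered C).
Variables (D : diagram R C) (K : cocone D) (Kc : is_colimit K).
Hypothesis lift : forall i (x : dobj D i),
  F (apex K) (leg K x) -> exists j (f : chom i j), F (dobj D j) (dmap f x).

Definition sf_elt j (x : dobj D j) (hx : F _ x) : sft F (dobj D j) :=
  SFT (introT (pbP _) hx).

Lemma sf_leg_lift (y : apex K) :
  F _ y -> exists j (x : dobj D j), F _ x /\ leg K x = y.
Proof.
case: (filtered_leg_surj hC Kc y) => i [x ->] /lift [j [f hf]].
by exists j, (dmap f x); split => //; rewrite leg_comm.
Qed.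

Variable K' : cocone (sf_diagram F D).

Lemma sf_leg_move i j (f : chom i j) (x : dobj D i) (hx : F _ x) (hfx : F _ (dmap f x)) :
  leg K' (sf_elt hfx) = leg K' (sf_elt hx).
Proof. by rewrite -(leg_comm K' f); congr (leg K' _); apply: val_inj. Qed.

Lemma sf_leg_wd i j (u : dobj D i) (v : dobj D j) (hu : F _ u) (hv : F _ v) :
  leg K u = leg K v -> leg K' (sf_elt hu) = leg K' (sf_elt hv).
Proof.
move=> e; case: (filtered_cup hC i j) => k [f [g _]].
have : leg K (dmap f u - dmap g v) = 0.
  by rewrite (linD (@leg_lin _ _ _ K _)) (linN (@leg_lin _ _ _ K _)) !leg_comm e subrr.
case/(filtered_leg_kernel hC Kc) => l [w].
rewrite dmapD dmapN => /eqP; rewrite subr_eq0 => /eqP e2.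
have hu' : F _ (dmap (ccomp w f) u) by apply: (sf_map _ F _ _ _ (dmap_lin _)).
have hv' : F _ (dmap (ccomp w g) v) by apply: (sf_map _ F _ _ _ (dmap_lin _)).
rewrite -(sf_leg_move hu hu') -(sf_leg_move hv hv'); congr (leg K' _).
by apply: val_inj; rewrite /= !dmap_comp.
Qed.

Definition lift_choice (y : sft F (apex K)) :
  {j : C & {x : dobj D j | F _ x /\ leg K x = sfval y}}.
Proof.
have [j /cid [x hx]] := cid (sf_leg_lift (elimT (pbP _) (sfvalP y))).
exact: existT _ j (exist _ x hx).
Defined.

Definition sf_induced (y : sft F (apex K)) : apex K' :=
  let: existT j (exist x hx) := lift_choice y in leg K' (sf_elt (proj1 hx)).

Lemma sf_inducedE y j (x : dobj D j) (hx : F _ x) :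
  leg K x = sfval y -> sf_induced y = leg K' (sf_elt hx).
Proof.
move=> e; rewrite /sf_induced; case: (lift_choice y) => j' [x' [hx' e']].
by apply: sf_leg_wd; rewrite e e'.
Qed.

Lemma sf_leg_onto (y : sft F (apex K)) :
  exists j (x : dobj D j) (hx : F _ x), leg K x = sfval y.
Proof. by case: (lift_choice y) => j [x [hx e]]; exists j, x, hx. Qed.

Lemma sf_induced_lin : linear sf_induced.
Proof.
move=> c y z.
case: (sf_leg_onto y) => i [x [hx ex]]; case: (sf_leg_onto z) => j [u [hu eu]].
case: (filtered_cup hC i j) => k [f [g _]].
have hx' : F _ (dmap f x) by apply: (sf_map _ F _ _ _ (dmap_lin _)).
have hu' : F _ (dmap g u) by apply: (sf_map _ F _ _ _ (dmap_lin _)).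
have hs : F _ (c *: dmap f x + dmap g u) by apply: sf_add => //; apply: sf_scale.
rewrite (sf_inducedE hs); last first.
  by rewrite /= (linD (@leg_lin _ _ _ K _)) (linZ (@leg_lin _ _ _ K _)) !leg_comm ex eu.
rewrite (sf_inducedE hx') ?leg_comm // (sf_inducedE hu') ?leg_comm //.
rewrite -(linZ (@leg_lin _ _ _ K' _)) -(linD (@leg_lin _ _ _ K' _)).
by congr (leg K' _); apply: val_inj.
Qed.

Lemma sf_induced_leg i (s : sft F (dobj D i)) :
  sf_induced (leg (sf_cocone F K) s) = leg K' s.
Proof.
rewrite (sf_inducedE (elimT (pbP _) (sfvalP s))) //.
by congr (leg K' _); apply: val_inj.
Qed.

End LiftingCriterion.

Theorem lifting_commutes_filtered (R : pzRingType) (F : subfun R) :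
  (forall (C : Defs.cat), filtered C -> forall (D : diagram R C) (K : cocone D),
     is_colimit K -> forall i (x : dobj D i),
     F (apex K) (leg K x) -> exists j (f : chom i j), F (dobj D j) (dmap f x)) ->
  commutes_with_filtered_colimits F.
Proof.
move=> lift C hC D K Kc K'; have liftK := lift C hC D K Kc; split.
  exists (sf_induced hC Kc liftK K'); split; first exact: sf_induced_lin.
  exact: sf_induced_leg.
move=> h1 h2 _ _ e1 e2 y.
case: (sf_leg_onto hC Kc liftK y) => j [x [hx e]].
have -> : y = leg (sf_cocone F K) (sf_elt hx) by apply: val_inj; rewrite /= e.
by rewrite e1 e2.
Qed.

(* A subfunctor containing every element is isomorphic to the identity
   functor, hence commutes with all colimits. *)
Section TotalSubfunctor.
Variables (R : pzRingType) (F : subfun R).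
Hypothesis F_total : forall (M : lmodType R) (x : M), F M x.

Definition sf_incl (M : lmodType R) (x : M) : sft F M := SFT (introT (pbP _) (F_total x)).

Lemma sf_incl_lin (M : lmodType R) : linear (@sf_incl M).
Proof. by move=> c x y; apply: val_inj. Qed.

Lemma sfval_lin (M : lmodType R) : linear (fun x : sft F M => sfval x).
Proof. by []. Qed.

Theorem total_commutes : commutes_with_colimits F.
Proof.
move=> C D K Kc K'.
pose L i (x : dobj D i) := leg K' (sf_incl x).
have L_lin i : linear (@L i) := comp_lin (@sf_incl_lin _) (@leg_lin _ _ _ K' i).
have L_comm i j (f : chom i j) x : L j (dmap f x) = L i x.
  by rewrite /L -(leg_comm K' f); congr (leg K' _); apply: val_inj.
case: (Kc (Cocone L_lin L_comm)) => [[h [hl hK]] uniq]; split.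
  exists (fun y => h (sfval y)); split; first exact: comp_lin (@sfval_lin _) hl.
  by move=> i x /=; rewrite hK /= /L; congr (leg K' _); apply: val_inj.
move=> h1 h2 l1 l2 e1 e2 y.
have -> : y = sf_incl (sfval y) by apply: val_inj.
apply: (uniq (fun z => h1 (sf_incl z)) (fun z => h2 (sf_incl z))).
- exact: comp_lin (@sf_incl_lin _) l1.
- exact: comp_lin (@sf_incl_lin _) l2.
- by move=> i x /=; rewrite /L -e1; congr h1; apply: val_inj.
- by move=> i x /=; rewrite /L -e2; congr h2; apply: val_inj.
Qed.

End TotalSubfunctor.

(* The colimit of a diagram of zero modules is zero: the identity and the
   zero endomorphism of the apex both factor the cocone. *)
Lemma colimit_of_zero (R : pzRingType) (C : Defs.cat) (D : diagram R C) (K : cocone D) :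
  is_colimit K -> (forall i (x : dobj D i), x = 0) -> forall y : apex K, y = 0.
Proof.
move=> Kc D0 y; case: (Kc K) => _ /(_ id (fun _ => 0)) uniq.
apply: uniq => //; first by move=> c u v; rewrite scaler0 addr0.
by move=> i x; rewrite (D0 i x) (lin0 (@leg_lin _ _ _ K i)).
Qed.

Section IdealPowers.
Variables (R : comPzRingType) (a : R -> Prop).

Lemma ideal_pow_mulr n s u : a s -> ideal_pow a n u -> ideal_pow a n.+1 (s * u).
Proof.
move=> hs hu; exists [:: (s, u)]; split; last by rewrite big_cons big_nil addr0.
by move=> p [<-|[]].
Qed.

Lemma ideal_pow_pow n r : a r -> ideal_pow a n (r ^+ n).
Proof. by move=> ar; elim: n => [|n IH] //; rewrite exprS; apply: ideal_pow_mulr. Qed.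

Lemma ideal_pow1 : is_ideal a -> forall r, ideal_pow a 1 r <-> a r.
Proof.
case=> a0 aD aM r; split; last by move=> ar; rewrite -[r]mulr1; apply: ideal_pow_mulr.
case=> s [hs ->]; elim: s hs => [|p s IH] hs; first by rewrite big_nil.
rewrite big_cons; apply: aD; last by apply: IH => q hq; apply: hs; right.
by case: (hs p (or_introl erefl)) => h1 _; rewrite mulrC; apply: aM.
Qed.

End IdealPowers.

Section Annihilation.
Variables (R : comPzRingType) (M : lmodType R).

Definition kills (b : R -> Prop) (x : M) : Prop := forall r, b r -> r *: x = 0.

Lemma kills_powS (b : R -> Prop) m (x : M) :
  (forall u v, b u -> ideal_pow b m v -> (u * v) *: x = 0) -> kills (ideal_pow b m.+1) x.
Proof.
move=> H r [s [hs ->]]; elim: s hs => [|p s IH] hs; first by rewrite big_nil scale0r.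
rewrite big_cons scalerDl IH ?addr0; last by move=> q hq; apply: hs; right.
by case: (hs p (or_introl erefl)) => h1 h2; apply: H.
Qed.

Lemma kills_pow_add (a : R -> Prop) p q (x : M) :
  (forall u v, ideal_pow a p u -> ideal_pow a q v -> (u * v) *: x = 0) ->
  kills (ideal_pow a (p + q)) x.
Proof.
elim: p x => [|p IH] x H r hr; first by rewrite -[r]mul1r; apply: H.
rewrite addSn in hr; apply: (kills_powS _ hr) => s t hs ht.
rewrite mulrC -scalerA; apply: (IH (s *: x)) => // u v hu hv.
rewrite scalerA -mulrA mulrC -mulrA mulrC.
by apply: H => //; apply: ideal_pow_mulr.
Qed.

Lemma kills_pow_mul (a : R -> Prop) n N (x : M) :
  kills (ideal_pow (ideal_pow a n) N) x -> kills (ideal_pow a (n * N)) x.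
Proof.
elim: N x => [|N IH] x H r hr.
  by have := H 1 I; rewrite scale1r => ->; rewrite scaler0.
rewrite mulnS in hr; apply: (kills_pow_add _ hr) => u v hu hv.
rewrite mulrC -scalerA; apply: (IH (u *: x)) => // w hw.
by rewrite scalerA mulrC; apply: H; apply: ideal_pow_mulr.
Qed.

Section SplitOffGenerator.
Variables (g0 : R) (I I' : R -> Prop).
Hypothesis I_split : forall u, I u -> exists u' c, I' u' /\ u = u' + c * g0.

Lemma kills_pow_split N : forall al be (x : M), (al + be <= N.+1)%N ->
  g0 ^+ al *: x = 0 -> kills (ideal_pow I' be) x -> kills (ideal_pow I N) x.
Proof.
elim: N => [|N IH] [|al] [|be] x hab hg hw r hr; rewrite ?expr0 ?scale1r in hg;
  try by rewrite hg scaler0.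
- by have := hw 1 Logic.I; rewrite scale1r => ->; rewrite scaler0.
- lia.
- by have := hw 1 Logic.I; rewrite scale1r => ->; rewrite scaler0.
apply: (kills_powS _ hr) => u v /I_split [u' [c [hu' ->]]] hv.
have h1 : (u' * v) *: x = 0.
  rewrite mulrC -scalerA; apply: (IH al.+1 be (u' *: x)) => //; first by lia.
    by rewrite scalerA mulrC -scalerA hg scaler0.
  by move=> w hw'; rewrite scalerA mulrC; apply: hw; apply: ideal_pow_mulr.
have h2 : v *: (g0 *: x) = 0.
  apply: (IH al be.+1 (g0 *: x) _ _ _ v hv); first by lia.
    by rewrite scalerA -exprSr.
  by move=> w hw'; rewrite scalerA mulrC -scalerA hw // scaler0.
by rewrite mulrDl scalerDl h1 add0r -mulrA [g0 * v]mulrC -!scalerA h2 scaler0.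
Qed.

End SplitOffGenerator.
End Annihilation.

Section GeneratedIdeals.
Variable R : comPzRingType.

Lemma gen_ideal_nil (u : R) : gen_ideal [::] u -> u = 0.
Proof. by case=> c ->; rewrite big_ord0. Qed.

Lemma gen_ideal_cons g0 (g : seq R) u :
  gen_ideal (g0 :: g) u -> exists u' c, gen_ideal g u' /\ u = u' + c * g0.
Proof.
case=> c ->; exists (\sum_(i < size g) c (lift ord0 i) * g`_i), (c ord0); split.
  by exists (fun i => c (lift ord0 i)).
by rewrite big_ord_recl addrC.
Qed.

Lemma gen_ideal_mem (g : seq R) r : r \in g -> gen_ideal g r.
Proof.
elim: g => [//|g0 g IH]; rewrite inE => /orP [/eqP ->|/IH [c ->]].
  exists (fun i => if unlift ord0 i is Some _ then 0 else 1).
  rewrite big_ord_recl unlift_none mul1r big1 ?addr0 // => i _.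
  by rewrite liftK mul0r.
exists (fun i => if unlift ord0 i is Some j then c j else 0).
rewrite big_ord_recl unlift_none mul0r add0r; apply: eq_bigr => i _.
by rewrite liftK.
Qed.

End GeneratedIdeals.

Section NilpotentAction.
Variables (R : comPzRingType) (M : lmodType R).

Lemma exp_kills_le r k j (x : M) : r ^+ k *: x = 0 -> (k <= j)%N -> r ^+ j *: x = 0.
Proof. by move=> h /subnK <-; rewrite exprD -scalerA h scaler0. Qed.

Lemma exp_kills_add (u v : R) (x : M) p q :
  u ^+ p *: x = 0 -> v ^+ q *: x = 0 -> (u + v) ^+ (p + q) *: x = 0.
Proof.
move=> hu hv; rewrite exprDn scaler_suml big1 // => i _.
rewrite -scalerMnl; case: (leqP q i) => hi.
  by rewrite -scalerA (exp_kills_le hv hi) scaler0 mul0rn.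
rewrite mulrC -scalerA (@exp_kills_le u p) ?scaler0 ?mul0rn //.
by have := ltn_ord i; lia.
Qed.

Lemma exp_kills_mul (s u : R) (x : M) p : u ^+ p *: x = 0 -> (s * u) ^+ p *: x = 0.
Proof. by move=> h; rewrite exprMn -scalerA h scaler0. Qed.

Lemma kills_gen_pow (g : seq R) (x : M) :
  (forall r, r \in g -> exists k, r ^+ k *: x = 0) ->
  exists N, kills (ideal_pow (gen_ideal g) N) x.
Proof.
elim: g => [|g0 g IH] H.
  exists 1%N; apply: kills_powS => u v /gen_ideal_nil -> _.
  by rewrite mul0r scale0r.
case: IH => [r hr|N hN]; first by apply: H; rewrite inE hr orbT.
case: (H g0 (mem_head _ _)) => k hk.
by exists (k + N)%N; apply: (kills_pow_split (@gen_ideal_cons _ g0 g) _ hk hN).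
Qed.

Lemma radical_pow (a : R -> Prop) n (x : M) : Gammabar a x ->
  forall r, ideal_pow a n.+1 r -> exists k, r ^+ k *: x = 0.
Proof.
move=> H r [s [hs ->]]; elim: s hs => [|p s IH] hs.
  by exists 1%N; rewrite big_nil expr1 scale0r.
rewrite big_cons; case: IH => [q hq|k2 hk2]; first by apply: hs; right.
case: (hs p (or_introl erefl)) => /H [k1 hk1] _.
by exists (k1 + k2)%N; apply: exp_kills_add hk2; rewrite mulrC; apply: exp_kills_mul.
Qed.

Lemma Gamma_Gammabar (a : R -> Prop) (x : M) : Gamma a x -> Gammabar a x.
Proof. by case=> m hm r ar; exists m; apply: hm; apply: ideal_pow_pow. Qed.

End NilpotentAction.

Section FinitelyGeneratedPower.
Variables (R : comPzRingType) (a : R -> Prop) (ha : is_ideal a) (n : nat) (g : seq R).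
Hypotheses (n_gt0 : (1 <= n)%N) (a_n_gen : forall r, ideal_pow a n r <-> gen_ideal g r).

Lemma generator_in_ideal r : r \in g -> a r.
Proof.
move/gen_ideal_mem/a_n_gen => h; apply/(ideal_pow1 ha r).
exact: (ideal_pow_le (m := 1) ha n_gt0 h).
Qed.

Lemma Gamma_of_generators (M : lmodType R) (x : M) :
  (forall r, r \in g -> exists k, r ^+ k *: x = 0) -> Gamma a x.
Proof.
move/kills_gen_pow => [N hN]; exists (n * N)%N; apply: kills_pow_mul.
have -> : ideal_pow a n = gen_ideal g by apply: funext => r; apply: propext.
exact: hN.
Qed.

Lemma Gamma_generators_exp (M : lmodType R) (x : M) :
  Gamma a x -> exists k, forall r, r \in g -> r ^+ k *: x = 0.
Proof.
case=> m hm; exists m => r /generator_in_ideal ar.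
by apply: hm; apply: ideal_pow_pow.
Qed.

Lemma Gamma_eq_Gammabar (M : lmodType R) (x : M) : Gamma a x <-> Gammabar a x.
Proof.
split; first exact: Gamma_Gammabar.
move=> hb; apply: Gamma_of_generators => r /gen_ideal_mem /a_n_gen.
by case: n n_gt0 => [//|n'] _; apply: radical_pow.
Qed.

End FinitelyGeneratedPower.

(* Part (c): if a^n = (g) is finitely generated, an element x of D i whose
   image in the filtered colimit lies in Gamma a has all r^k *: x (r in g)
   dying in the colimit, hence dying along one common arrow f; then f x lies
   in Gamma a, which is the lifting criterion. *)
Theorem fg_power_commutes (R : comPzRingType) (a : R -> Prop) (ha : is_ideal a) :
  (exists n : nat, (1 <= n)%N /\ finitely_generated (ideal_pow a n)) ->
  (forall (M : lmodType R) (x : M), Gamma a x <-> Gammabar a x) /\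
  commutes_with_filtered_colimits (Gamma_sf ha).
Proof.
case=> n [n_gt0 [g a_n_gen]]; split.
  by move=> M x; apply: (Gamma_eq_Gammabar n_gt0 a_n_gen).
apply: lifting_commutes_filtered => C hC D K Kc i x /= hx.
case: (Gamma_generators_exp ha n_gt0 a_n_gen hx) => k hk.
case: (filtered_leg_kernel_seq hC Kc (s := [seq r ^+ k *: x | r <- g])).
  by move=> z /mapP [r hr ->]; rewrite (linZ (@leg_lin _ _ _ K _)); apply: hk.
move=> j [f hf]; exists j, f; apply: (Gamma_of_generators a_n_gen) => r hr.
by exists k; rewrite -(linZ (dmap_lin f)); apply/hf/map_f.
Qed.

Definition natcat : Defs.cat.
Proof.
refine (@Cat nat (fun i j => is_true (i <= j)%N) (fun i => leqnn i)
  (fun i j k g f => leq_trans f g) _ _ _); intros; exact: eq_irrelevance.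
Defined.

Lemma natcat_filtered : filtered natcat.
Proof.
split; first exact: (inhabits 0%N).
- by move=> i j; exists (maxn i j); split; constructor; [apply: leq_maxl | apply: leq_maxr].
- by move=> i j f g; exists j, (leqnn j); apply: eq_irrelevance.
Qed.

Section ChainColimit.
Variables (R : pzRingType) (V : lmodType R) (S : nat -> submodule V).
Hypothesis S_mono : forall i j, (i <= j)%N -> forall x, S i x -> S j x.

Definition chain_union : submodule V.
Proof.
refine (@Submodule R V (fun x => exists i, S i x) _ _ _).
- by exists 0%N; apply: smem0.
- move=> x y [i hx] [j hy]; exists (maxn i j).
  by apply: smemD; apply: S_mono hx || apply: S_mono hy; rewrite ?leq_maxl ?leq_maxr.
- by move=> c x [i hx]; exists i; apply: smemZ.
Defined.

Lemma chain_proj0 i j : (i <= j)%N -> forall x, S i x -> qproj (S j) x = 0.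
Proof. by move=> ij x /(S_mono ij) /qproj_eq0. Qed.

Lemma union_proj0 i x : S i x -> qproj chain_union x = 0.
Proof. by move=> hx; apply/qproj_eq0; exists i. Qed.

Definition chain_map (i j : nat) (_ : (i <= j)%N) :
  quotient_module (S i) -> quotient_module (S j) := qlift (qproj (S j)).

Lemma chain_mapE i j (ij : (i <= j)%N) x : chain_map ij (qproj (S i) x) = qproj (S j) x.
Proof. exact: (qliftE (qproj_lin (S j)) (chain_proj0 ij)). Qed.

Definition chain_diagram : diagram R natcat.
Proof.
refine (@Diagram R natcat (fun i => quotient_module (S i)) chain_map
  (fun i j ij => qlift_lin (qproj_lin (S j)) (chain_proj0 ij)) _ _).
- by move=> i; elim/qproj_ind => x; rewrite chain_mapE.
- by move=> i j k jk ij; elim/qproj_ind => x; rewrite !chain_mapE.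
Defined.

Definition chain_leg (i : nat) : quotient_module (S i) -> quotient_module chain_union :=
  qlift (qproj chain_union).
Arguments chain_leg i : clear implicits.

Lemma chain_legE i x : chain_leg i (qproj (S i) x) = qproj chain_union x.
Proof. exact: (qliftE (qproj_lin chain_union) (@union_proj0 i)). Qed.

Definition chain_cocone : cocone chain_diagram.
Proof.
refine (@Cocone R natcat chain_diagram (quotient_module chain_union) chain_leg
  (fun i => qlift_lin (qproj_lin chain_union) (@union_proj0 i)) _).
by move=> i j ij; elim/qproj_ind => x; rewrite /= chain_mapE !chain_legE.
Defined.

Theorem chain_colimit : is_colimit chain_cocone.
Proof.
move=> K'.
pose L (x : V) : apex K' := leg K' (qproj (S 0) x).
have L_lin : linear L := comp_lin (qproj_lin (S 0)) (@leg_lin _ _ _ K' 0%N).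
have L_leg i x : L x = leg K' (qproj (S i) x).
  by rewrite /L -(leg_comm K' (leq0n i)) /= chain_mapE.
have L_union x : chain_union x -> L x = 0.
  by case=> i hx; rewrite (L_leg i) (qproj_eq0 _ _).2 // (lin0 (@leg_lin _ _ _ K' i)).
split.
  exists (qlift L); split; first exact: qlift_lin.
  by move=> i; elim/qproj_ind => x; rewrite /= chain_legE qliftE.
move=> h1 h2 _ _ e1 e2; elim/qproj_ind => x.
by have := e1 0%N (qproj _ x); have := e2 0%N (qproj _ x); rewrite /= !chain_legE => -> ->.
Qed.

End ChainColimit.

Definition P2 := forall n : nat, 'Z_(2 ^ n.+1).
HB.instance Definition _ := gen_eqMixin P2.
HB.instance Definition _ := gen_choiceMixin P2.

Definition p2add (f g : P2) : P2 := fun n => f n + g n.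
Definition p2opp (f : P2) : P2 := fun n => - f n.
Definition p2mul (f g : P2) : P2 := fun n => f n * g n.

Local Ltac pointwise := apply: functional_extensionality_dep => ?.

Lemma p2addA : associative p2add. Proof. by move=> f g h; pointwise; apply: addrA. Qed.
Lemma p2addC : commutative p2add. Proof. by move=> f g; pointwise; apply: addrC. Qed.
Lemma p2add0 : left_id (fun _ => 0) p2add. Proof. by move=> f; pointwise; apply: add0r. Qed.
Lemma p2addN : left_inverse (fun _ => 0) p2opp p2add.
Proof. by move=> f; pointwise; apply: addNr. Qed.
HB.instance Definition _ := GRing.isZmodule.Build P2 p2addA p2addC p2add0 p2addN.

Lemma p2mulA : associative p2mul. Proof. by move=> f g h; pointwise; apply: mulrA. Qed.
Lemma p2mulC : commutative p2mul. Proof. by move=> f g; pointwise; apply: mulrC. Qed.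
Lemma p2mul1 : left_id (fun _ => 1) p2mul. Proof. by move=> f; pointwise; apply: mul1r. Qed.
Lemma p2mulD : left_distributive p2mul p2add.
Proof. by move=> f g h; pointwise; apply: mulrDl. Qed.
HB.instance Definition _ := GRing.Zmodule_isComPzRing.Build P2 p2mulA p2mulC p2mul1 p2mulD.

Lemma P2addE (f g : P2) n : (f + g) n = f n + g n. Proof. by []. Qed.
Lemma P2mulE (f g : P2) n : (f * g) n = f n * g n. Proof. by []. Qed.
Lemma P2expE (f : P2) k n : (f ^+ k) n = f n ^+ k.
Proof. by elim: k => [|k IH] //; rewrite !exprS P2mulE IH. Qed.

Lemma two_exp_eq0 n k : (n < k)%N -> (2%:R : 'Z_(2 ^ n.+1)) ^+ k = 0.
Proof.
move=> hk; rewrite -natrX; apply: val_inj => /=.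
rewrite val_Zp_nat ?(ltn_exp2l 0) //; apply/eqP; rewrite -/(dvdn _ _).
by rewrite dvdn_exp2l.
Qed.

Lemma two_exp_neq0 n k : (k <= n)%N -> (2%:R : 'Z_(2 ^ n.+1)) ^+ k != 0.
Proof.
move=> hk; rewrite -natrX; apply/eqP => /(congr1 val) /=.
rewrite val_Zp_nat ?(ltn_exp2l 0) // modn_small ?ltn_exp2l //.
by move/eqP; rewrite expn_eq0.
Qed.

Definition P2o : lmodType P2 := GRing.regular P2.

Definition vanish_from (i : nat) : submodule P2o.
Proof.
refine (@Submodule P2 P2o (fun x : P2 => forall m, (i <= m)%N -> x m = 0) _ _ _).
- by [].
- by move=> x y hx hy m hm; rewrite P2addE hx ?hy ?addr0.
- by move=> c x hx m hm; rewrite -[(c *: x) m]/(c m * x m) hx ?mulr0.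
Defined.

Lemma vanish_from_mono i j : (i <= j)%N -> forall x, vanish_from i x -> vanish_from j x.
Proof. by move=> ij x hx m hm; apply: hx; apply: leq_trans hm. Qed.

Definition a_nil (r : P2) : Prop :=
  (exists i, vanish_from i r) /\ forall m, exists t, r m = 2%:R * t.

Lemma a_nil_ideal : is_ideal a_nil.
Proof.
split.
- by split; [exists 0%N | move=> m; exists 0; rewrite mulr0].
- move=> x y [[i hx] ex] [[j hy] ey]; split.
    exists (maxn i j); apply: smemD.
      exact: vanish_from_mono (leq_maxl i j) _ hx.
    exact: vanish_from_mono (leq_maxr i j) _ hy.
  move=> m; case: (ex m) => t ht; case: (ey m) => u hu.
  by exists (t + u); rewrite P2addE ht hu mulrDr.
- move=> r x [[i hx] ex]; split; first by exists i => m hm; rewrite P2mulE hx ?mulr0.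
  by move=> m; case: (ex m) => t ht; exists (r m * t); rewrite P2mulE ht mulrCA.
Qed.

Lemma a_nil_nil : nil_ideal a_nil.
Proof.
move=> r [[i hi] ev]; exists i.+1; apply: functional_extensionality_dep => m.
rewrite P2expE; case: (leqP i m) => hm; first by rewrite hi // expr0n.
by case: (ev m) => t ->; rewrite exprMn two_exp_eq0 ?mul0r // ltnW.
Qed.

Definition two_at (m : nat) : P2 := fun n => if n == m then 2%:R else 0.

Lemma two_at_nil m : a_nil (two_at m).
Proof.
split.
  by exists m.+1 => n hn; rewrite /two_at; case: eqP => // e; rewrite e ltnn in hn.
move=> n; rewrite /two_at; case: eqP => _; first by exists 1; rewrite mulr1.
by exists 0; rewrite mulr0.
Qed.

(* Gamma_{a_nil} does not commute with the colimit of the chain P2 / S i,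
   which is P2 / (eventually zero sequences): the class of 1 is killed by
   a_nil, but no lift of it to some P2 / S i is killed by a power of a_nil,
   since a power a_nil^k contains 2^k at index m, nonzero for m >= k. *)
Theorem nil_not_commutes : ~ commutes_with_filtered_colimits (Gamma_sf a_nil_ideal).
Proof.
move=> H; have Kc := H _ natcat_filtered _ _ (chain_colimit (S_mono := vanish_from_mono)).
pose U := chain_union vanish_from_mono.
have one_torsion : Gamma a_nil (qproj U 1).
  exists 1%N => r /(ideal_pow1 a_nil_ideal) [fr _].
  by rewrite -(linZ (qproj_lin U)) (qproj_eq0 _ _).2 //; rewrite [_ *: _]mulr1.
have [i [s /(congr1 (fun z => sfval z)) /= lift1]] :=
  filtered_leg_surj natcat_filtered Kc
    (@SFT _ (Gamma_sf a_nil_ideal) _ (qproj U 1) (introT (pbP _) one_torsion)).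
have /pbP [k hk] := sfvalP s.
move: (sfval s) hk lift1 => {s}; elim/qproj_ind => p hk; rewrite chain_legE.
move/qprojP => [N hN].
pose m := maxn (maxn N k) i.
have := hk _ (ideal_pow_pow k (two_at_nil m)).
rewrite -(linZ (qproj_lin _)) => /qproj_eq0 /(_ m).
rewrite -[(_ *: p) m]/((two_at m ^+ k) m * p m) P2expE /two_at eqxx.
have -> : p m = 1.
  apply/eqP; rewrite eq_sym -subr_eq0; apply/eqP.
  by apply: hN; rewrite !leq_max leqnn.
rewrite mulr1 => /(_ (leq_maxr _ _)) /eqP; apply/negP; apply: two_exp_neq0.
by rewrite !leq_max leqnn orbT.
Qed.

(* The category with objects false, true and, besides identities, two
   parallel arrows false -> true, named by the booleans. *)
Definition chom2 (i j : bool) : Type :=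
  match i, j with false, true => bool | true, false => Empty_set | _, _ => unit end.
Definition cid2 (i : bool) : chom2 i i := match i with false => tt | true => tt end.
Definition ccomp2 (i j k : bool) : chom2 j k -> chom2 i j -> chom2 i k :=
  match i as i, j as j, k as k return chom2 j k -> chom2 i j -> chom2 i k with
  | false, false, false => fun _ _ => tt
  | false, false, true => fun g _ => g
  | false, true, true => fun _ f => f
  | true, true, true => fun _ _ => tt
  | false, true, false => fun g _ => match g with end
  | true, false, _ => fun _ f => match f with end
  | true, true, false => fun g _ => match g with end
  end.

Definition cat2 : Defs.cat.
Proof.
refine (@Cat bool chom2 cid2 ccomp2 _ _ _).
- by case; case => f; case: f.
- by case; case => f; case: f.
- by case; case; case; case => h g f; case: h; case: g; case: f.
Defined.

Section Coequalizer.
Variables (R : pzRingType) (V : lmodType R) (f : V -> V).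
Hypothesis f_lin : linear f.

Definition image_sub : submodule V.
Proof.
refine (@Submodule R V (fun y => exists x, y = f x) _ _ _).
- by exists 0; rewrite (lin0 f_lin).
- by move=> _ _ [x ->] [y ->]; exists (x + y); rewrite (linD f_lin).
- by move=> c _ [x ->]; exists (c *: x); rewrite (linZ f_lin).
Defined.

Definition coeq_map (i j : bool) : chom2 i j -> V -> V :=
  match i as i, j as j return chom2 i j -> V -> V with
  | false, true => fun b x => if b then f x else 0
  | _, _ => fun _ x => x
  end.

Definition coeq_diagram : diagram R cat2.
Proof.
refine (@Diagram R cat2 (fun _ => V) coeq_map _ _ _).
- move=> [] [] //= b c x y; case: b => //=; first exact: f_lin.
  by rewrite scaler0 addr0.
- by case.
- by move=> [] [] [] //= g h x; (try case: g); (try case: h).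
Defined.

Definition coeq_leg (i : bool) (x : V) : quotient_module image_sub :=
  if i then qproj image_sub x else 0.

Definition coeq_cocone : cocone coeq_diagram.
Proof.
refine (@Cocone R cat2 coeq_diagram (quotient_module image_sub) coeq_leg _ _).
- move=> [] c x y /=; first exact: qproj_lin.
  by rewrite scaler0 addr0.
- move=> [] [] //= b x; apply/qproj_eq0.
  by case: b; [exists x | exists 0; rewrite (lin0 f_lin)].
Defined.

Theorem coeq_colimit : is_colimit coeq_cocone.
Proof.
move=> K'.
pose L (x : V) : apex K' := leg K' (i := true) x.
have L_lin : linear L := @leg_lin _ _ _ K' true.
have L_false x : leg K' (i := false) x = 0.
  rewrite -(leg_comm K' (i := false) (j := true) false x) /=.
  exact: lin0 (@leg_lin _ _ _ K' true).
have L_image x : image_sub x -> L x = 0.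
  case=> y ->; rewrite /L -[f y]/(dmap (d := coeq_diagram) (i := false) (j := true) true y).
  by rewrite leg_comm L_false.
split.
  exists (qlift L); split; first exact: qlift_lin.
  move=> [] x /=; first exact: qliftE.
  by rewrite L_false; apply: (lin0 (qlift_lin L_lin L_image)).
move=> h1 h2 _ _ e1 e2; elim/qproj_ind => x.
by have := e1 true x; have := e2 true x; rewrite /= => -> ->.
Qed.

End Coequalizer.

(* Part (d), negative half: over Z with a = 2Z, Gamma a(Z) = 0, while the
   coequalizer Z / 2Z of multiplication by 2 and 0 is 2-torsion and nonzero;
   so Gamma a(colimit) is not the colimit of the zero diagram Gamma a(Z). *)
Definition Zo : lmodType int := GRing.regular int.

Lemma double_lin : linear (fun x : Zo => x * 2).
Proof. by move=> c x y; rewrite mulrDl scalerAl. Qed.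

Lemma Gamma_two_Z_int (x : Zo) : Gamma two_Z x -> x = 0.
Proof.
case=> n hn; have := hn (2 ^+ n) (@ideal_pow_pow _ two_Z n 2 (dvdzz 2)).
by rewrite [_ *: _]/(_ * _) => /eqP; rewrite mulf_eq0 expf_eq0 andbF => /eqP.
Qed.

Theorem two_Z_not_commutes : ~ commutes_with_colimits (Gamma_sf two_Z_ideal).
Proof.
move=> H; pose Q := quotient_module (image_sub double_lin).
have one_torsion : Gamma two_Z (qproj (image_sub double_lin) 1).
  exists 1%N => r /(ideal_pow1 two_Z_ideal) /dvdzP [k ->].
  by rewrite -(linZ (qproj_lin _)); apply/qproj_eq0; exists k; rewrite [_ *: _]mulr1.
have Gamma_Z_zero (i : bool) (x : sft (Gamma_sf two_Z_ideal) Zo) : x = 0.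
  by apply: val_inj; apply: Gamma_two_Z_int; apply/pbP/(sfvalP x).
have := colimit_of_zero (H _ _ _ (coeq_colimit (f_lin := double_lin))) Gamma_Z_zero
  (@SFT _ (Gamma_sf two_Z_ideal) Q _ (introT (pbP _) one_torsion)).
move/(congr1 (fun z => sfval z)) => /= /qproj_eq0 [x /(congr1 (fun z : int => (2 %| z)%Z))].
by rewrite dvdz_mull.
Qed.

Lemma two_Z_fg : finitely_generated (ideal_pow two_Z 1).
Proof.
exists [:: 2] => r; rewrite (ideal_pow1 two_Z_ideal); split.
  by case/dvdzP => k ->; exists (fun _ => k); rewrite big_ord1.
by case=> c ->; rewrite big_ord1 /two_Z dvdz_mull.
Qed.

Theorem proposition9p6 :
  (* (a) a nilpotent *)
  (forall (R : comPzRingType) (a : R -> Prop) (ha : is_ideal a),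
     nilpotent_ideal a ->
     (forall (M : lmodType R) (x : M), Gamma a x <-> Gammabar a x) /\
     commutes_with_colimits (Gamma_sf ha)) /\
  (* (b) a nil *)
  ((forall (R : comPzRingType) (a : R -> Prop), is_ideal a -> nil_ideal a ->
      commutes_with_colimits (Gammabar_sf a)) /\
   (exists (R : comPzRingType) (a : R -> Prop) (ha : is_ideal a),
      nil_ideal a /\ ~ commutes_with_filtered_colimits (Gamma_sf ha))) /\
  (* (c) some power a^n, n >= 1, finitely generated *)
  (forall (R : comPzRingType) (a : R -> Prop) (ha : is_ideal a),
     (exists n : nat, (1 <= n)%N /\ finitely_generated (ideal_pow a n)) ->
     (forall (M : lmodType R) (x : M), Gamma a x <-> Gammabar a x) /\
     commutes_with_filtered_colimits (Gamma_sf ha)) /\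
  (* (d) R noetherian; counterexample R = Z, a = 2Z for arbitrary colimits *)
  ((forall (R : comPzRingType) (a : R -> Prop) (ha : is_ideal a),
      noetherian R ->
      (forall (M : lmodType R) (x : M), Gamma a x <-> Gammabar a x) /\
      commutes_with_filtered_colimits (Gamma_sf ha)) /\
   (forall (M : lmodType int) (x : M), Gamma two_Z x <-> Gammabar two_Z x) /\
   ~ commutes_with_colimits (Gamma_sf two_Z_ideal)).
Proof.
split.
  move=> R a ha [n a_n0].
  have Gamma_all (M : lmodType R) (x : M) : Gamma a x.
    by exists n => r /a_n0 ->; rewrite scale0r.
  split; last exact: total_commutes.
  by move=> M x; split=> [/Gamma_Gammabar|_] //; apply: Gamma_all.
split.
  split; last first.
    by exists P2, a_nil, a_nil_ideal; split; [apply: a_nil_nil | apply: nil_not_commutes].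
  move=> R a _ a_is_nil; apply: total_commutes => M x r /a_is_nil [k hk].
  by exists k; rewrite hk scale0r.
split; first exact: fg_power_commutes.
split.
  move=> R a ha noeth; apply: fg_power_commutes; exists 1%N; split => //.
  exact: noeth _ (ideal_pow_ideal ha 1).
split; last exact: two_Z_not_commutes.
move=> M x; apply: (proj1 (fg_power_commutes two_Z_ideal _)).
by exists 1%N; split => //; apply: two_Z_fg.
Qed.
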